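(* Let $M$ be a monoid and let $\sigma : X^* \to M$ and $\tau : Y^* \to M$ be finite monoid choices of generators. Then $L_\sigma(M)$ is an inverse morphic image of $L_\tau(M)$, i.e. there is a monoid morphism $\rho : \hat{X}^* \to \hat{Y}^*$ with $L_\sigma(M) = \{w \in \hat{X}^* : w\rho \in L_\tau(M)\}$. The corresponding statement holds for a semigroup $S$ with finite semigroup choices of generators $\sigma : X^+ \to S$ and $\tau : Y^+ \to S$.
   Context: Maps are written on the right. $X^*$, $X^+$: free monoid and free semigroup on $X$. For a monoid $M$ and surjective monoid morphism $\sigma : X^* \to M$, let $\overline{X} = \{\overline{x} : x \in X\}$ be new symbols, $\hat{X} = X \cup \overline{X}$; the loop automaton has vertex set $M$, for each $a \in M$, $x \in X$ an edge $a \to a(x\sigma)$ labelled $x$ and an edge $a(x\sigma) \to a$ labelled $\overline{x}$; the loop problem $L_\sigma(M) \subseteq \hat{X}^*$ is the set of labels of paths from the identity to the identity. For a semigroup $S$ and surjective morphism $\sigma : X^+ \to S$, $L_\sigma(S)$ is the loop problem of $S^1$ ($S$ with a new identity adjoined, even if one exists) with respect to the unique extension $\sigma^1 : X^* \to S^1$. *)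

From mathcomp Require Import all_boot.
Set Implicit Arguments. Unset Strict Implicit. Unset Printing Implicit Defensive.

Definition is_monoid (M : Type) (mul : M -> M -> M) (e : M) : Prop :=
  [/\ forall a b c, mul a (mul b c) = mul (mul a b) c,
      forall a, mul e a = a & forall a, mul a e = a].

Definition is_semigroup (S : Type) (mul : S -> S -> S) : Prop :=
  forall a b c, mul a (mul b c) = mul (mul a b) c.

Definition free_monoid_morph (X M : Type) (mul : M -> M -> M) (e : M)
  (s : seq X -> M) : Prop :=
  s [::] = e /\ forall u v, s (u ++ v) = mul (s u) (s v).

(* Semigroup morphism from the free semigroup X^+ (nonempty words);
   the value of [s] on the empty word is irrelevant. *)
Definition free_semigroup_morph (X S : Type) (mul : S -> S -> S)
  (s : seq X -> S) : Prop :=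
  forall u v : seq X, 0 < size u -> 0 < size v -> s (u ++ v) = mul (s u) (s v).

(* hat X = X + Xbar : [inl x] is x, [inr x] is xbar. *)
Definition hat (X : Type) := (X + X)%type.

(* Paths in the loop automaton of monoid (M, mul, e) w.r.t. generator
   images [g x = x sigma]: edges a --x--> a (x sigma) and
   a (x sigma) --xbar--> a.  [lpath a w b] : some path from a to b has label w. *)
Fixpoint lpath (X M : Type) (mul : M -> M -> M) (g : X -> M)
  (a : M) (w : seq (hat X)) (b : M) : Prop :=
  match w with
  | [::] => a = b
  | inl x :: w' => lpath mul g (mul a (g x)) w' b
  | inr x :: w' => exists c, mul c (g x) = a /\ lpath mul g c w' b
  end.

Definition loop_problem (X M : Type) (mul : M -> M -> M) (e : M)
  (s : seq X -> M) (w : seq (hat X)) : Prop :=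
  lpath mul (fun x => s [:: x]) e w e.

(* S^1 : S with a new identity adjoined (None). *)
Definition mul1 (S : Type) (mul : S -> S -> S) (a b : option S) : option S :=
  match a, b with
  | None, _ => b
  | _, None => a
  | Some x, Some y => Some (mul x y)
  end.

Definition ext1 (X S : Type) (s : seq X -> S) (w : seq X) : option S :=
  if w is [::] then None else Some (s w).

Definition sg_loop_problem (X S : Type) (mul : S -> S -> S)
  (s : seq X -> S) (w : seq (hat X)) : Prop :=
  loop_problem (mul1 mul) None (ext1 s) w.

From mathcomp Require Import all_boot.
From Stdlib Require Import Setoid.
Set Implicit Arguments. Unset Strict Implicit. Unset Printing Implicit Defensive.

(* Since tau is onto, every generator x of sigma has a word u_x over Y with
   u_x tau = x sigma.  Send x to u_x and xbar to the formal inverse of u_x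
   (reversed, barred).  In the loop automaton of tau, reading u_x from a leads
   exactly to a (x sigma), and reading its formal inverse from a leads exactly
   to the c with c (x sigma) = a, i.e. along the same edges as x and xbar in
   the automaton of sigma; hence the two automata accept the same paths.  The
   semigroup case is the monoid case for S^1. *)

Definition inverse_morphic_image (A B : Type) (L : seq A -> Prop)
    (K : seq B -> Prop) : Prop :=
  exists rho : seq A -> seq B,
    free_monoid_morph (@cat B) [::] rho /\ forall w, L w <-> K (rho w).

Lemma lpath_cat (X M : Type) (mul : M -> M -> M) (g : X -> M) a p q b :
  lpath mul g a (p ++ q) b <-> exists2 c, lpath mul g a p c & lpath mul g c q b.
Proof.
elim: p a => [|[x|x] p IHp] a /=.
- by split=> [|[c ->]]; first exists a.
- exact: IHp.
- split.
  + by case=> c1 [Hc1 /IHp [c Hp Hq]]; exists c => //; exists c1.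
  + by case=> c [c1 [Hc1 Hp]] Hq; exists c1; split=> //; apply/IHp; exists c.
Qed.

Section WordPaths.
Variables (M : Type) (mul : M -> M -> M) (e : M).
Hypothesis monoidM : is_monoid mul e.
Variables (Y : Type) (t : seq Y -> M).
Hypothesis morph_t : free_monoid_morph mul e t.

Local Notation gen_t := (fun y => t [:: y]).

Lemma lpath_map_inl u a c :
  lpath mul gen_t a (map inl u) c <-> c = mul a (t u).
Proof.
case: monoidM => mulA _ mul1; case: morph_t => t_nil t_cat.
elim: u a => [|y u IHu] a /=; first by rewrite t_nil mul1; split=> ->.
by rewrite -[y :: u]cat1s t_cat mulA; apply: IHu.
Qed.

Lemma lpath_rev_map_inr u a c :
  lpath mul gen_t a (rev (map inr u)) c <-> mul c (t u) = a.
Proof.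
case: monoidM => mulA _ mul1; case: morph_t => t_nil t_cat.
elim/last_ind: u a => [|u y IHu] a /=; first by rewrite t_nil mul1; split=> ->.
rewrite map_rcons rev_rcons /= -cats1 t_cat; split.
- by case=> c1 [<- /IHu <-]; rewrite mulA.
- by move=> <-; exists (mul c (t u)); split; [rewrite mulA | apply/IHu].
Qed.

End WordPaths.

Section HatSubstitution.
Variables (X Y : Type) (u : X -> seq Y).

Definition hat_subst_letter (z : hat X) : seq (hat Y) :=
  match z with
  | inl x => map inl (u x)
  | inr x => rev (map inr (u x))
  end.

Definition hat_subst (w : seq (hat X)) : seq (hat Y) :=
  flatten (map hat_subst_letter w).

Lemma hat_subst_morph : free_monoid_morph (@cat (hat Y)) [::] hat_subst.
Proof. by split=> // v w; rewrite /hat_subst map_cat flatten_cat. Qed.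

Lemma lpath_hat_subst (M : Type) (mul : M -> M -> M) (e : M) (g : X -> M)
    (t : seq Y -> M) :
  is_monoid mul e -> free_monoid_morph mul e t -> (forall x, t (u x) = g x) ->
  forall w a b, lpath mul g a w b <-> lpath mul (fun y => t [:: y]) a (hat_subst w) b.
Proof.
move=> monoidM morph_t tu; elim=> [|z w IHw] a b //.
change (hat_subst (z :: w)) with (hat_subst_letter z ++ hat_subst w).
rewrite lpath_cat; case: z => x /=.
- rewrite IHw -tu; split=> [Hw | [c /(lpath_map_inl monoidM morph_t) ->] //].
  by exists (mul a (t (u x))) => //; apply/(lpath_map_inl monoidM morph_t).
- split=> [[c [Hc /IHw Hw]] | [c /(lpath_rev_map_inr monoidM morph_t) Hc /IHw Hw]].
  + by exists c => //; apply/(lpath_rev_map_inr monoidM morph_t); rewrite tu.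
  + by exists c; rewrite -tu.
Qed.

End HatSubstitution.

Lemma loop_problem_inverse_morphic (M : Type) (mul : M -> M -> M) (e : M)
    (X : finType) (Y : Type) (s : seq X -> M) (t : seq Y -> M) :
  is_monoid mul e -> free_monoid_morph mul e t -> (forall m, exists w, t w = m) ->
  inverse_morphic_image (loop_problem mul e s) (loop_problem mul e t).
Proof.
move=> monoidM morph_t surj_t.
have [u tu] : exists u : X -> seq Y, forall x, t (u x) = s [:: x].
  exact: fin_all_exists (fun x => surj_t (s [:: x])).
exists (hat_subst u); split; first exact: hat_subst_morph.
by move=> w; apply: (lpath_hat_subst monoidM morph_t tu).
Qed.

Section AdjoinIdentity.
Variables (S : Type) (mul : S -> S -> S).

Lemma mul1_monoid : is_semigroup mul -> is_monoid (mul1 mul) None.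
Proof. by move=> mulA; split=> [[a|] [b|] [c|] /=|[]|[]] //; rewrite mulA. Qed.

Lemma ext1_morph (X : Type) (s : seq X -> S) :
  free_semigroup_morph mul s -> free_monoid_morph (mul1 mul) None (ext1 s).
Proof.
move=> morph_s; split=> // [[|x u] [|y v]] //=; first by rewrite cats0.
by rewrite -morph_s.
Qed.

Lemma ext1_surj (X : Type) (s : seq X -> S) :
  (forall a, exists w, 0 < size w /\ s w = a) ->
  forall m, exists w, ext1 s w = m.
Proof.
move=> surj_s [a|]; last by exists [::].
by have [[|x w] [//= _ <-]] := surj_s a; exists (x :: w).
Qed.

End AdjoinIdentity.

Theorem proposition4p6 :
  (forall (M : Type) (mul : M -> M -> M) (e : M),
     is_monoid mul e ->
     forall (X Y : finType) (s : seq X -> M) (t : seq Y -> M),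
       free_monoid_morph mul e s -> (forall m : M, exists w, s w = m) ->
       free_monoid_morph mul e t -> (forall m : M, exists w, t w = m) ->
       exists rho : seq (hat X) -> seq (hat Y),
         free_monoid_morph (@cat (hat Y)) [::] rho /\
         forall w : seq (hat X),
           loop_problem mul e s w <-> loop_problem mul e t (rho w))
  /\
  (forall (S : Type) (mul : S -> S -> S),
     is_semigroup mul ->
     forall (X Y : finType) (s : seq X -> S) (t : seq Y -> S),
       free_semigroup_morph mul s ->
       (forall a : S, exists w, 0 < size w /\ s w = a) ->
       free_semigroup_morph mul t ->
       (forall a : S, exists w, 0 < size w /\ t w = a) ->
       exists rho : seq (hat X) -> seq (hat Y),
         free_monoid_morph (@cat (hat Y)) [::] rho /\
         forall w : seq (hat X),
           sg_loop_problem mul s w <-> sg_loop_problem mul t (rho w)).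
Proof.
split=> [M mul e monoidM X Y s t _ _ morph_t surj_t | S mul mulA X Y s t _ _ morph_t surj_t].
- exact: loop_problem_inverse_morphic.
- apply: loop_problem_inverse_morphic (mul1_monoid mulA) _ _.
  + exact: ext1_morph.
  + exact: ext1_surj.
Qed.
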